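(* Let $(X,\sigma,T)$ be as in the context and suppose it has no extra spectrum. Let $\pi^L_{eq}:L\to L_{eq}$ be the maximal equicontinuous factor of $(L,\sigma_L)$ (neutral element $e_{eq}=\pi^L_{eq}(e)$), and let $\eta_0:L_{eq}\to X_{eq}$ be the factor map with $\tilde\pi_{eq}=\eta_0\circ\pi^L_{eq}$. Then $\eta_0$ is bijective and $L^{fib}=(\pi^L_{eq})^{-1}(e_{eq})$.
   Context: $T$ is an abelian group acting continuously by $\sigma$ on a compact Hausdorff space $X$; the action is minimal and not distal. $E(X)$ is the Ellis semigroup (closure of $\{\sigma^t\}$ in $X^X$ with pointwise topology), with $T$-action $\sigma_E^t(f)=\sigma^t\circ f$. $\pi_{eq}:X\to X_{eq}$ is the maximal equicontinuous factor; $X_{eq}$ is a compact abelian group with neutral element $0$ a singular point (a point whose fibre contains two distinct proximal points). Fix a minimal idempotent $e$, $L=E(X)e$, $\sigma_L$ the restriction of $\sigma_E$ to $L$, $\mathcal G=eL$. $\tilde\pi_{eq}:L\to X_{eq}$, $\tilde\pi_{eq}(f)=\pi_{eq}(f(x))-\pi_{eq}(x)$ (independent of $x$); it is an equicontinuous factor of $(L,\sigma_L)$. $L^{fib}=\{f\in L:\tilde\pi_{eq}(f)=0\}$, $\mathcal G^{fib}=\mathcal G\cap L^{fib}$. The little structure group $\Gamma\subset\mathcal G$ is generated by the entries of the sandwich matrix of a Rees matrix representation of the kernel of $E(X)$. For a subgroup $H$ of a right-topological group $G$, $\overline{\mathrm{ncl}_G(H)}$ is the topological closure of the smallest normal subgroup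 of $G$ containing $H$. The system has no extra spectrum (NES) if $\overline{\mathrm{ncl}_{\mathcal G}(\Gamma)}=\mathcal G^{fib}$. *)

From HB Require Import structures.
From mathcomp Require Import all_boot all_order all_algebra.
From mathcomp Require Import all_classical all_reals all_analysis.
Set Implicit Arguments. Unset Strict Implicit. Unset Printing Implicit Defensive.
Import Order.TTheory GRing.Theory Num.Theory.
Local Open Scope classical_set_scope.
Local Open Scope ring_scope.

Definition is_action (T : zmodType) (Y : Type) (rho : T -> Y -> Y) :=
  (forall y, rho 0 y = y) /\ (forall s t y, rho (s + t) y = rho s (rho t y)).

Definition eq_system (T : zmodType) (Y : uniformType) (rho : T -> Y -> Y) :=
  [/\ compact [set: Y], hausdorff_space Y, is_action rho,
      (forall t, continuous (rho t)) &
      (forall U, entourage U -> exists2 V, entourage V &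
         forall y z, V (y, z) -> forall t, U (rho t y, rho t z))].

(** p : A -> Y (A an invariant subset of Z, with the subspace topology)
    is a factor map from (A, act) onto (Y, rho). *)
Definition is_factor (T : zmodType) (Z : topologicalType) (A : set Z)
    (act : T -> Z -> Z) (Y : topologicalType) (rho : T -> Y -> Y)
    (p : Z -> Y) :=
  [/\ {within A, continuous p},
      (forall y, exists2 z, A z & p z = y) &
      (forall t z, A z -> p (act t z) = rho t (p z))].

Definition is_max_eq_factor (T : zmodType) (Z : topologicalType) (A : set Z)
    (act : T -> Z -> Z) (Y : uniformType) (rho : T -> Y -> Y) (p : Z -> Y) :=
  [/\ eq_system rho, is_factor A act rho p &
      forall (Y' : uniformType) (rho' : T -> Y' -> Y') (p' : Z -> Y'),
        eq_system rho' -> is_factor A act rho' p' ->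
        exists h : Y -> Y', continuous h /\ forall z, A z -> p' z = h (p z)].

Section Ellis.
Variables (T : zmodType) (X : topologicalType) (sigma : T -> X -> X).

Definition minimal_system := forall x, closure (range (fun t => sigma t x)) = [set: X].

Definition ellis : set {ptws X -> X} :=
  closure (range (fun t => (sigma t : {ptws X -> X}))).

Definition actE (t : T) (f : {ptws X -> X}) : {ptws X -> X} := sigma t \o f.

Definition proximal (x y : X) := exists2 f, ellis f & f x = f y.
Definition distal_system := forall x y, proximal x y -> x = y.

Definition left_ideal (I : set {ptws X -> X}) :=
  I `<=` ellis /\ forall f g, ellis f -> I g -> I (f \o g).
Definition minimal_left_ideal (I : set {ptws X -> X}) :=
  [/\ left_ideal I, I !=set0 &
      forall J, left_ideal J -> J !=set0 -> J `<=` I -> J = I].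

(** kernel (minimal two-sided ideal) = union of the minimal left ideals *)
Definition ellis_kernel : set {ptws X -> X} :=
  [set f | exists2 I, minimal_left_ideal I & I f].

Definition idempotent (u : {ptws X -> X}) := u \o u = u.

Definition minimal_idempotent (e : {ptws X -> X}) :=
  idempotent e /\ exists2 I, minimal_left_ideal I & I e.

Variable e : {ptws X -> X}.

Definition Lset : set {ptws X -> X} := [set g | exists2 f, ellis f & g = f \o e].
Definition Gset : set {ptws X -> X} := [set g | exists2 f, Lset f & g = e \o f].

(** subgroups / normal subgroups of the group G = eL (neutral element e) *)
Definition G_subgroup (N : set {ptws X -> X}) :=
  [/\ N `<=` Gset, N e, (forall f g, N f -> N g -> N (f \o g)) &
      (forall n h, N n -> Gset h -> h \o n = e -> N h)].
Definition G_normal (N : set {ptws X -> X}) :=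
  G_subgroup N /\
  forall g h n, Gset g -> Gset h -> h \o g = e -> N n -> N (g \o n \o h).
Definition G_gen (S : set {ptws X -> X}) : set {ptws X -> X} :=
  [set f | forall N, G_subgroup N -> S `<=` N -> N f].
Definition G_ncl (S : set {ptws X -> X}) : set {ptws X -> X} :=
  [set f | forall N, G_normal N -> S `<=` N -> N f].

(** Entries of the sandwich matrix of the Rees matrix representation of the
    kernel K normalised at e: p_{lambda,i} = u_lambda v_i with u_lambda the
    idempotent of eK meeting the minimal left ideal lambda, and v_i the
    idempotent of Ke meeting the minimal right ideal i. *)
Definition sandwich_entries : set {ptws X -> X} :=
  [set f | exists u v : {ptws X -> X}, [/\ f = u \o v,
     [/\ ellis_kernel u, idempotent u & e \o u = u] &
     [/\ ellis_kernel v, idempotent v & v \o e = v]]].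

Definition Gamma : set {ptws X -> X} := G_gen sandwich_entries.

Variables (Xeq : zmodType) (pieq : X -> Xeq).

(** L^fib : tilde pi_eq (f) = pi_eq(f x) - pi_eq(x) = 0 *)
Definition Lfib : set {ptws X -> X} :=
  [set f | Lset f /\ forall x, pieq (f x) - pieq x = 0].
Definition Gfib : set {ptws X -> X} := Gset `&` Lfib.

Definition NES := closure (G_ncl Gamma) `&` Gset = Gfib.

Definition singular_point (z : Xeq) :=
  exists x y, [/\ pieq x = z, pieq y = z, x <> y & proximal x y].

End Ellis.

From HB Require Import structures.
From mathcomp Require Import all_boot all_order all_algebra.
From mathcomp Require Import all_classical all_reals all_analysis.
Import Order.TTheory GRing.Theory Num.Theory.
Local Open Scope classical_set_scope.
Local Open Scope ring_scope.
Set Implicit Arguments. Unset Strict Implicit.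

(** The set of [n] in [G = eL] with [piL n = piL e] is a normal subgroup of
    [G]: left multiplication by elements of the Ellis semigroup and right
    multiplication by elements of [L] both descend to the maximal
    equicontinuous factor [L -> Leq].  It contains every sandwich entry [u v],
    because [u e = e] and [e v = e] for the normalised idempotents, hence it
    contains [ncl(Gamma)]; as [piL] is continuous it also contains the points
    of the closure lying in [G], i.e. all of [G^fib] by NES.  If now [eta0]
    identifies [piL f] and [piL g] for [f], [g] in [G], then [n = f g^-1] lies
    in [G^fib] and [piL f = piL (n g) = piL g].  So [eta0] is injective, and
    [f] is in [L^fib] iff [eta0 (piL f) = 0 = eta0 (piL e)] iff
    [piL f = piL e]. *)

Lemma hausdorff_entourage_eq (Y : uniformType) (a b : Y) :
  hausdorff_space Y -> (forall W, entourage W -> W (a, b)) -> a = b.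
Proof. by move=> hY ab; apply: close_eq => //; rewrite entourage_close. Qed.

Lemma entourage_split_sym (Y : uniformType) (W : set (Y * Y)) : entourage W ->
  exists2 W', entourage W' & forall a b c,
    (W' (c, a) -> W' (c, b) -> W (a, b)) /\ (W' (a, c) -> W' (b, c) -> W (a, b)).
Proof.
move=> eW; exists (split_ent W `&` [set xy | split_ent W (xy.2, xy.1)]).
  exact/entourage_invI/entourage_split_ent.
by move=> a b c; split=> -[h1 h2] [h3 h4]; apply: (@entourage_split _ c).
Qed.

Lemma within_continuous_entourage (Z : topologicalType) (Y : uniformType)
    (A : set Z) (p : Z -> Y) (z : Z) (W : set (Y * Y)) :
  {within A, continuous p} -> A z -> entourage W ->
  nbhs z [set y | A y -> W (p z, p y)].
Proof.
move=> /subspace_continuousP p_cont Az eW.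
have := p_cont z Az _ (nbhs_entourage (p z) eW).
by rewrite nbhs_simpl /=; apply: filterS => y /xsectionP.
Qed.

Lemma within_continuous_closure_eq (Z : topologicalType) (Y : uniformType)
    (A N : set Z) (p : Z -> Y) (b : Y) (n : Z) :
  hausdorff_space Y -> {within A, continuous p} ->
  (forall z, N z -> A z /\ p z = b) -> closure N n -> A n -> p n = b.
Proof.
move=> hY p_cont pN Nn An; apply: hausdorff_entourage_eq => // W eW.
have [z [/pN [Az <-] /= Wnz]] := Nn _ (within_continuous_entourage p_cont An eW).
exact: Wnz Az.
Qed.

Lemma ptws_comp_nbhsr (X : topologicalType) (g : X -> X) (k : {ptws X -> X})
    (B : set {ptws X -> X}) :
  nbhs (k \o g : {ptws X -> X}) B -> nbhs k [set c : {ptws X -> X} | B (c \o g)].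
Proof.
suff : (fun c : {ptws X -> X} => (c \o g : {ptws X -> X})) @ nbhs k -->
    (k \o g : {ptws X -> X}) by apply.
apply/cvg_sup => i; apply/cvg_image.
  by rewrite eqEsubset; split=> // y _; exists (fun _ => y).
move=> B' nB'; exists ((fun f : {ptws X -> X} => f i) @^-1` B').
  exact: (@proj_continuous X (fun _ => X) (g i) k _ nB').
rewrite eqEsubset; split=> y; first by case=> z Bz <-.
by move=> By; exists (fun _ => y).
Qed.

Section MinimalLeftIdeal.
Variables (T : zmodType) (X : topologicalType) (sigma : T -> X -> X).
Variable I : set {ptws X -> X}.
Hypothesis I_min : minimal_left_ideal sigma I.

Lemma minimal_left_ideal_divr (m g : {ptws X -> X}) :
  I m -> I g -> exists2 y, I y & y \o m = g.
Proof.
have [[IE Imull] [x Ix] Iminimal] := I_min.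
move=> Im Ig; have Im_eq : [set y \o m | y in I] = I.
  apply: Iminimal.
  - split=> [_ [y Iy <-]|f _ Ef [y Iy <-]].
      by apply: (IE); apply: (Imull) => //; apply: (IE).
    by exists (f \o y) => //; apply: (Imull).
  - by exists (x \o m), x.
  - by move=> _ [y Iy <-]; apply: (Imull) => //; apply: (IE).
by rewrite -Im_eq in Ig; case: Ig => y Iy <-; exists y.
Qed.

Lemma Lset_minimal_left_ideal (e : {ptws X -> X}) : I e -> Lset sigma e = I.
Proof.
have [[IE Imull] _ _] := I_min.
move=> Ie; apply/seteqP; split; first by move=> _ [f Ef ->]; apply: (Imull).
move=> g Ig; have [y Iy <-] := minimal_left_ideal_divr Ie Ig.
by exists y; first exact: IE.
Qed.

(** Every element of [I] is of the form [y \o w], hence fixed by right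
    multiplication by the idempotent [w]; [e] need not be idempotent. *)
Lemma minimal_left_ideal_idempotent_eq (e w : {ptws X -> X}) :
  I e -> I w -> e \o w = w -> w \o w = w -> w = e.
Proof.
move=> Ie Iw ew ww; rewrite -ew; have [y _ <-] := minimal_left_ideal_divr Iw Ie.
by change (y \o (w \o w) = y \o w); rewrite ww.
Qed.

End MinimalLeftIdeal.

Section EllisFactor.
Variables (T : zmodType) (X : topologicalType) (sigma : T -> X -> X).
Variables (A : set {ptws X -> X}) (Y : uniformType) (rho : T -> Y -> Y).
Variable p : {ptws X -> X} -> Y.
Hypothesis A_mull : forall h f, ellis sigma h -> A f -> A (h \o f).
Hypothesis p_cont : {within A, continuous p}.
Hypothesis p_equiv : forall t f, A f -> p (actE sigma t f) = rho t (p f).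
Hypothesis Y_hausdorff : hausdorff_space Y.

Lemma factor_ellis_approx (k f g : {ptws X -> X}) (W : set (Y * Y)) :
  ellis sigma k -> A f -> A g -> entourage W ->
  exists t, W (p (k \o f), rho t (p f)) /\ W (p (k \o g), rho t (p g)).
Proof.
move=> Ek Af Ag eW.
have near_kf := within_continuous_entourage p_cont (A_mull Ek Af) eW.
have near_kg := within_continuous_entourage p_cont (A_mull Ek Ag) eW.
have [_ [[t _ <-] [/= Wf Wg]]] :=
  Ek _ (filterI (ptws_comp_nbhsr near_kf) (ptws_comp_nbhsr near_kg)).
have Et : ellis sigma (sigma t) by apply: subset_closure; exists t.
by exists t; rewrite -!p_equiv //; split; [apply: Wf | apply: Wg]; apply: A_mull.
Qed.

Lemma factor_mull_eq (k f g : {ptws X -> X}) :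
  ellis sigma k -> A f -> A g -> p f = p g -> p (k \o f) = p (k \o g).
Proof.
move=> Ek Af Ag pfg; apply: hausdorff_entourage_eq => // W eW.
have [W' eW' W'W] := entourage_split_sym eW.
have [t [Wf Wg]] := factor_ellis_approx Ek Af Ag eW'.
by apply: (W'W _ _ (rho t (p f))).2 => //; rewrite pfg.
Qed.

Hypothesis rho_action : is_action rho.
Hypothesis rho_equicont : forall U, entourage U -> exists2 V, entourage V &
  forall y z, V (y, z) -> forall t, U (rho t y, rho t z).

(** [k \o f = k \o g] makes [f] and [g] proximal, and proximal points are
    identified in an equicontinuous factor. *)
Lemma factor_mull_inj (k f g : {ptws X -> X}) :
  ellis sigma k -> A f -> A g -> k \o f = k \o g -> p f = p g.
Proof.
have [rho0 rhoD] := rho_action.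
move=> Ek Af Ag kfg; apply: hausdorff_entourage_eq => // W eW.
have [V eV VW] := rho_equicont eW.
have [W' eW' W'V] := entourage_split_sym eV.
have [t [Wf Wg]] := factor_ellis_approx Ek Af Ag eW'.
rewrite kfg in Wf; have := VW _ _ ((W'V _ _ _).1 Wf Wg) (- t).
by rewrite -!rhoD addNr !rho0.
Qed.

End EllisFactor.

(** [f |-> p (f \o m)] is again an equicontinuous factor map, so by
    maximality it factors through [p]. *)
Lemma max_eq_factor_mulr_eq (T : zmodType) (X : topologicalType)
    (sigma : T -> X -> X) (A : set {ptws X -> X}) (Y : uniformType)
    (rho : T -> Y -> Y) (p : {ptws X -> X} -> Y) (m a b : {ptws X -> X}) :
  is_max_eq_factor A (actE sigma) rho p ->
  (forall f, A f -> A (f \o m)) ->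
  (forall z, A z -> exists2 y, A y & y \o m = z) ->
  A a -> A b -> p a = p b -> p (a \o m) = p (b \o m).
Proof.
move=> [Y_eq [p_cont p_surj p_equiv] p_max] A_mulr A_divr Aa Ab pab.
have pm_factor : is_factor A (actE sigma) rho (fun f => p (f \o m)).
  split.
  - apply/subspace_continuousP => x Ax S nS.
    have := proj1 (subspace_continuousP _ _) p_cont (x \o m) (A_mulr _ Ax) S nS.
    rewrite /= nbhs_simpl /= => /ptws_comp_nbhsr.
    by rewrite nbhs_simpl /=; apply: filterS => c /= Sc Ac; apply: Sc (A_mulr _ Ac).
  - move=> y; have [z Az <-] := p_surj y; have [y' Ay' <-] := A_divr _ Az.
    by exists y'.
  - by move=> t z Az; rewrite -p_equiv //; apply: A_mulr.
have [H [_ pmH]] := p_max _ _ _ Y_eq pm_factor.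
by rewrite !pmH // pab.
Qed.

Section MinimalIdempotent.
Variables (T : zmodType) (X : topologicalType) (sigma : T -> X -> X).
Variable e : {ptws X -> X}.
Hypothesis e_min : minimal_idempotent sigma e.
Local Notation L := (Lset sigma e).
Local Notation G := (Gset sigma e).

Lemma idempotent_e : e \o e = e.
Proof. by case: e_min. Qed.

Lemma Lset_minimal : minimal_left_ideal sigma L.
Proof. by case: e_min => _ [I I_min Ie]; rewrite (Lset_minimal_left_ideal I_min Ie). Qed.

Lemma Lset_e : L e.
Proof. by case: e_min => _ [I I_min Ie]; rewrite (Lset_minimal_left_ideal I_min Ie). Qed.

Lemma Lset_ellis f : L f -> ellis sigma f.
Proof. by have [[LE _] _ _] := Lset_minimal; apply: LE. Qed.

Lemma Lset_mull h f : ellis sigma h -> L f -> L (h \o f).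
Proof. by have [[_ Lmull] _ _] := Lset_minimal; apply: Lmull. Qed.

Lemma Lset_comp f g : L f -> L g -> L (f \o g).
Proof. by move=> /Lset_ellis; apply: Lset_mull. Qed.

Lemma Lset_compe f : L f -> f \o e = f.
Proof.
by move=> [g _ ->]; change (g \o (e \o e) = g \o e); rewrite idempotent_e.
Qed.

Lemma Lset_divr m g : L m -> L g -> exists2 y, L y & y \o m = g.
Proof. exact: (minimal_left_ideal_divr Lset_minimal). Qed.

Lemma Lset_idempotent_eq w : L w -> e \o w = w -> w \o w = w -> w = e.
Proof. exact: (minimal_left_ideal_idempotent_eq Lset_minimal Lset_e). Qed.

Lemma GsetP g : G g <-> L g /\ e \o g = g.
Proof.
split; last by case=> Lg <-; exists g.
move=> [f Lf ->]; split; first exact: Lset_comp Lset_e Lf.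
by change ((e \o e) \o f = e \o f); rewrite idempotent_e.
Qed.

Lemma Gset_comp f g : G f -> G g -> G (f \o g).
Proof.
move=> /GsetP [Lf ef] /GsetP [Lg _]; apply/GsetP; split; first exact: Lset_comp.
by change ((e \o f) \o g = f \o g); rewrite ef.
Qed.

Lemma Gset_inv g : G g -> exists2 h, G h & h \o g = e.
Proof.
move=> /GsetP [Lg _]; have [y Ly yg] := Lset_divr Lg Lset_e.
exists (e \o y); first by exists y.
by change (e \o (y \o g) = e); rewrite yg idempotent_e.
Qed.

Lemma Gset_inv_comm g h : G g -> G h -> h \o g = e -> g \o h = e.
Proof.
move=> /GsetP [Lg eg] /GsetP [Lh _] hg; apply: Lset_idempotent_eq.
- exact: Lset_comp.
- by change ((e \o g) \o h = g \o h); rewrite eg.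
- by change (g \o (h \o g) \o h = g \o h); rewrite hg Lset_compe.
Qed.

End MinimalIdempotent.

Section MaxEqFactorOfL.
Variables (T : zmodType) (X : topologicalType) (sigma : T -> X -> X).
Variable e : {ptws X -> X}.
Hypothesis e_min : minimal_idempotent sigma e.
Local Notation L := (Lset sigma e).
Local Notation G := (Gset sigma e).
Variables (Leq : uniformType) (rhoL : T -> Leq -> Leq).
Variable piL : {ptws X -> X} -> Leq.
Hypothesis piL_max : is_max_eq_factor L (actE sigma) rhoL piL.

Lemma piL_mull k f g :
  ellis sigma k -> L f -> L g -> piL f = piL g -> piL (k \o f) = piL (k \o g).
Proof.
have [[_ Leq_hausdorff _ _ _] [piL_cont _ piL_equiv] _] := piL_max.
exact: (factor_mull_eq (rho := rhoL) (Lset_mull e_min) piL_cont piL_equiv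
  Leq_hausdorff).
Qed.

Lemma piL_mull_inj k f g :
  ellis sigma k -> L f -> L g -> k \o f = k \o g -> piL f = piL g.
Proof.
have [[_ Leq_hausdorff rhoL_action _ rhoL_equicont] [piL_cont _ piL_equiv] _] :=
  piL_max.
exact: (factor_mull_inj (Lset_mull e_min) piL_cont piL_equiv Leq_hausdorff
  rhoL_action rhoL_equicont).
Qed.

Lemma piL_mulr m a b :
  L m -> L a -> L b -> piL a = piL b -> piL (a \o m) = piL (b \o m).
Proof.
move=> Lm; apply: max_eq_factor_mulr_eq piL_max _ _.
- by move=> f Lf; apply: Lset_comp.
- by move=> z Lz; apply: Lset_divr.
Qed.

Lemma piL_compel f : L f -> piL (e \o f) = piL f.
Proof.
move=> Lf; apply: (piL_mull_inj (Lset_ellis e_min (Lset_e e_min))) => //.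
- exact: Lset_comp (Lset_e e_min) Lf.
- by change ((e \o e) \o f = e \o f); rewrite (idempotent_e e_min).
Qed.

Definition G_piL_fibre := [set n | G n /\ piL n = piL e].

Lemma G_piL_fibre_normal : G_normal sigma e G_piL_fibre.
Proof.
have Le := Lset_e e_min; have LE := Lset_ellis e_min.
have G_L g : G g -> L g by case/(GsetP e_min).
split; first split.
- by move=> n [].
- by split=> //; apply/(GsetP e_min); rewrite (idempotent_e e_min).
- move=> n m [Gn pn] [Gm pm]; split; first exact: (Gset_comp e_min).
  rewrite (piL_mull (LE _ (G_L _ Gn)) (G_L _ Gm) Le pm).
  by rewrite (Lset_compe e_min (G_L _ Gn)).
- move=> n h [Gn pn] Gh hn; split=> //.
  have := piL_mull (LE _ (G_L _ Gh)) (G_L _ Gn) Le pn.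
  by rewrite hn (Lset_compe e_min (G_L _ Gh)).
- move=> g h n Gg Gh hg [Gn pn].
  have Lgn : L (g \o n) := Lset_comp e_min (G_L _ Gg) (G_L _ Gn).
  split; first exact: (Gset_comp e_min (Gset_comp e_min Gg Gn) Gh).
  have pgn : piL (g \o n) = piL g.
    rewrite (piL_mull (LE _ (G_L _ Gg)) (G_L _ Gn) Le pn).
    by rewrite (Lset_compe e_min (G_L _ Gg)).
  rewrite (piL_mulr (G_L _ Gh) Lgn (G_L _ Gg) pgn).
  by rewrite (Gset_inv_comm e_min Gg Gh hg).
Qed.

(** Right-normalised idempotents [v] satisfy [e \o v = e] and left-normalised
    ones [u \o e = e], so [piL (u \o v) = piL (u \o e) = piL e]. *)
Lemma sandwich_entries_piL_fibre : sandwich_entries sigma e `<=` G_piL_fibre.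
Proof.
have Le := Lset_e e_min; have ee := idempotent_e e_min.
move=> _ [u [v [-> [[Iu [[IE _] _ _] Iu_u] uu eu]
  [[Iv [[IE' _] _ _] Iv_v] vv ve]]]].
have Eu : ellis sigma u by apply: IE.
have Lv : L v by exists v => //; apply: IE'.
split.
  apply/(GsetP e_min); split; first exact: (Lset_mull e_min Eu Lv).
  by change ((e \o u) \o v = u \o v); rewrite eu.
have ev : e \o v = e.
  apply: (Lset_idempotent_eq e_min); first exact: (Lset_comp e_min Le Lv).
    by change ((e \o e) \o v = e \o v); rewrite ee.
  change (e \o (v \o e) \o v = e \o v); rewrite ve.
  by change (e \o (v \o v) = e \o v); rewrite vv.
have ue : u \o e = e.
  apply: (Lset_idempotent_eq e_min); first exact: (Lset_mull e_min Eu Le).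
    by change ((e \o u) \o e = u \o e); rewrite eu.
  change (u \o (e \o u) \o e = u \o e); rewrite eu.
  by change ((u \o u) \o e = u \o e); rewrite uu.
have pv : piL v = piL e.
  by apply: (piL_mull_inj (Lset_ellis e_min Le)) => //; rewrite ev ee.
by rewrite (piL_mull Eu Lv Le pv) ue.
Qed.

Lemma Gamma_piL_fibre : Gamma sigma e `<=` G_piL_fibre.
Proof.
by move=> f; apply; [apply: G_piL_fibre_normal.1 | apply: sandwich_entries_piL_fibre].
Qed.

Variables (Xeq : zmodType) (pieq : X -> Xeq).
Hypothesis nes : NES sigma e pieq.

Lemma Gfib_piL n : Gfib sigma e pieq n -> piL n = piL e.
Proof.
have [[_ Leq_hausdorff _ _ _] [piL_cont _ _] _] := piL_max.
rewrite -nes => -[ncl_n /(GsetP e_min) [Ln _]].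
apply: (within_continuous_closure_eq Leq_hausdorff piL_cont _ ncl_n Ln).
by move=> z /(_ _ G_piL_fibre_normal Gamma_piL_fibre) [/(GsetP e_min) [Lz _]].
Qed.

Variables (eta0 : Leq -> Xeq) (x0 : X).
Hypothesis eta0_piL :
  forall f, L f -> forall x, eta0 (piL f) = pieq (f x) - pieq x.

Lemma eta0_piL_comp f g :
  L f -> L g -> eta0 (piL (f \o g)) = eta0 (piL f) + eta0 (piL g).
Proof.
move=> Lf Lg; rewrite (eta0_piL (Lset_comp e_min Lf Lg) x0).
by rewrite (eta0_piL Lf (g x0)) (eta0_piL Lg x0) addrA subrK.
Qed.

Lemma eta0_piL_e : eta0 (piL e) = 0.
Proof.
have Le := Lset_e e_min; apply/(addrI (eta0 (piL e))).
by rewrite -eta0_piL_comp // (idempotent_e e_min) addr0.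
Qed.

Lemma LfibP f : Lfib sigma e pieq f <-> L f /\ eta0 (piL f) = 0.
Proof.
split=> -[Lf f0]; split=> //; first by rewrite (eta0_piL Lf x0) f0.
by move=> x; rewrite -eta0_piL.
Qed.

(** With [h \o g = e], the element [n = f \o h] lies in [G^fib], hence in
    the fibre of [piL] at [e] by NES, and [f = n \o g]. *)
Lemma Gset_eta0_piL_inj f g :
  G f -> G g -> eta0 (piL f) = eta0 (piL g) -> piL f = piL g.
Proof.
have Le := Lset_e e_min; have GL k : G k -> L k by case/(GsetP e_min).
move=> Gf Gg fg; have [h Gh hg] := Gset_inv e_min Gg.
have Gn : G (f \o h) := Gset_comp e_min Gf Gh.
have Lf := GL _ Gf; have Lg := GL _ Gg; have Lh := GL _ Gh; have Ln := GL _ Gn.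
have pn : piL (f \o h) = piL e.
  apply: Gfib_piL; split=> //; apply/LfibP; split=> //.
  by rewrite eta0_piL_comp // fg addrC -eta0_piL_comp // hg eta0_piL_e.
have -> : f = (f \o h) \o g.
  by change (f = f \o (h \o g)); rewrite hg (Lset_compe e_min Lf).
rewrite (piL_mulr Lg Ln Le pn).
by case/(GsetP e_min): Gg => _ ->.
Qed.

Lemma eta0_inj : injective eta0.
Proof.
have [_ [_ piL_surj _] _] := piL_max.
move=> a b; have [f Lf <-] := piL_surj a; have [g Lg <-] := piL_surj b.
rewrite -(piL_compel Lf) -(piL_compel Lg) => fg.
by apply: Gset_eta0_piL_inj => //; [exists f | exists g].
Qed.

End MaxEqFactorOfL.

Unset Implicit Arguments.

Theorem mainTheorem3 (T : zmodType) (X : topologicalType) (sigma : T -> X -> X)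
    (Xeq : UniformZmodule.type) (tau : T -> Xeq) (pieq : X -> Xeq)
    (e : {ptws X -> X})
    (Leq : uniformType) (rhoL : T -> Leq -> Leq) (piL : {ptws X -> X} -> Leq)
    (eta0 : Leq -> Xeq) :
  compact [set: X] -> hausdorff_space X ->
  is_action sigma -> (forall t, continuous (sigma t)) ->
  minimal_system sigma -> ~ distal_system sigma ->
  is_max_eq_factor [set: X] sigma (fun t y => y + tau t) pieq ->
  singular_point sigma pieq 0 ->
  minimal_idempotent sigma e ->
  NES sigma e pieq ->
  is_max_eq_factor (Lset sigma e) (actE sigma) rhoL piL ->
  is_factor [set: Leq] rhoL (fun t y => y + tau t) eta0 ->
  (forall f, Lset sigma e f -> forall x, eta0 (piL f) = pieq (f x) - pieq x) ->
  bijective eta0 /\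
  Lfib sigma e pieq = Lset sigma e `&` piL @^-1` [set piL e].
Proof.
(* Of the singular point only its fibre's nonemptiness, i.e. a point of [X], is used. *)
move=> _ _ _ _ _ _ _ [x0 _] e_min nes piL_max [_ eta0_surj _] eta0_piL.
have inj := eta0_inj e_min piL_max nes x0 eta0_piL.
have pe := eta0_piL_e e_min x0 eta0_piL.
split.
  rewrite -setTT_bijective; split=> // [a b _ _ /inj //|y _].
  by have [x _ <-] := eta0_surj y; exists x.
apply/seteqP; split=> f.
  by move=> /(LfibP x0 eta0_piL) [Lf pf]; split=> //; apply: inj; rewrite /= pf pe.
by move=> [Lf /= pf]; apply/(LfibP x0 eta0_piL); split=> //; rewrite pf pe.
Qed.
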